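(* Let $\mathbf{W}=\langle W;\to,\neg,{}^{+},{}^{-},1\rangle$ be a quasi-Wajsberg* algebra. For $x,y\in W$ define $0:=x\to x$, $x\oplus y:=\neg x\to y$ and $-x:=\neg x$. Then $g(\mathbf{W})=\langle W;\oplus,-,{}^{+},{}^{-},0,1\rangle$ (with ${}^+,{}^-,1$ those of $\mathbf{W}$) is a quasi-MV* algebra, where in $g(\mathbf{W})$ the join is $x\vee y=(x^{+}\oplus(-x^{+}\oplus y^{+})^{+})\oplus(x^{-}\oplus(-x^{-}\oplus y^{-})^{+})$.
   Context: A quasi-Wajsberg* algebra is an algebra $\langle W;\to,\neg,{}^{+},{}^{-},1\rangle$ of type $\langle2,1,1,1,0\rangle$ such that for all $x,y,z\in W$: (QW*1) $x\to y=\neg y\to\neg x$; (QW*2) $(x\to 1)\to((y\to 1)\to z)=(y\to 1)\to((x\to 1)\to z)$; (QW*3) $(1\to x)\to 1=1$; (QW*4) $(z\to z)\to(x\to y)=x\to y$; (QW*5) $(1\to 1)\to x^{+}=((1\to 1)\to x)^{+}=(x\to 1)\to 1$ and $(1\to 1)\to x^{-}=((1\to 1)\to x)^{-}=(x\to\neg 1)\to\neg 1$; (QW*6) $x\to y=(y^{+}\to x^{-})\to(x^{+}\to y^{-})$; (QW*7) $\neg(x\to y)=y\to x$; (QW*8) $\neg\neg x=x$; (QW*9) $(x\to(\neg x\to y))^{+}=x^{+}\to(\neg x^{+}\to y^{+})$; (QW*10) $x\vee y=y\vee x$; (QW*11) $x\vee(y\vee z)=(x\vee y)\vee z$; (QW*12)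 $x\to(y\vee z)=(x\to y)\vee(x\to z)$; where $x\vee y:=((x^{+}\to y^{+})^{+}\to(\neg x)^{-})\to((y^{-}\to x^{-})^{-}\to x^{-})$. Conventions: ${}^+,{}^-$ bind tighter than $\neg$, which binds tighter than $\to$. (In such an algebra $x\to x=y\to y$ for all $x,y$, so $0$ is well defined.) A quasi-MV* algebra is an algebra $\langle A;\oplus,-,{}^{+},{}^{-},0,1\rangle$ of type $\langle2,1,1,1,0,0\rangle$ such that for all $x,y,z\in A$: (QMV*1) $x\oplus y=y\oplus x$; (QMV*2) $(1\oplus x)\oplus(y\oplus(1\oplus z))=((1\oplus x)\oplus y)\oplus(1\oplus z)$; (QMV*3) $(x\oplus 1)\oplus 1=1$; (QMV*4) $(x\oplus y)\oplus 0=x\oplus y$; (QMV*5) $x^{+}\oplus 0=(x\oplus 0)^{+}=1\oplus(-1\oplus x)$ and $x^{-}\oplus 0=(x\oplus 0)^{-}=-1\oplus(1\oplus x)$; (QMV*6) $x\oplus y=(x^{+}\oplus y^{+})\oplus(x^{-}\oplus y^{-})$; (QMV*7) $0=-0$; (QMV*8) $x\oplus(-x)=0$; (QMV*9) $-(x\oplus y)=-x\oplus(-y)$; (QMV*10) $-(-x)=x$; (QMV*11) $(-x\oplus(x\oplus y))^{+}=-x^{+}\oplus(x^{+}\oplus y^{+})$; (QMV*12) $x\vee y=y\vee x$; (QMV*13) $x\vee(y\vee z)=(x\vee y)\vee z$; (QMV*14) $x\oplus(y\vee z)=(x\oplus y)\vee(x\oplus z)$; where $x\vee y:=(x^{+}\oplus(-x^{+}\oplus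 y^{+})^{+})\oplus(x^{-}\oplus(-x^{-}\oplus y^{-})^{+})$, and ${}^+,{}^-$ bind tighter than $-$. *)

Section QW.
Variables (W : Type) (imp : W -> W -> W) (neg : W -> W)
          (pl mi : W -> W) (one : W).

Definition qw_join (x y : W) : W :=
  imp (imp (pl (imp (pl x) (pl y))) (mi (neg x)))
      (imp (mi (imp (mi y) (mi x))) (mi x)).

Record is_quasi_Wajsberg_star : Prop := {
  QW1 : forall x y, imp x y = imp (neg y) (neg x);
  QW2 : forall x y z, imp (imp x one) (imp (imp y one) z)
                    = imp (imp y one) (imp (imp x one) z);
  QW3 : forall x, imp (imp one x) one = one;
  QW4 : forall x y z, imp (imp z z) (imp x y) = imp x y;
  QW5a : forall x, imp (imp one one) (pl x) = pl (imp (imp one one) x);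
  QW5b : forall x, pl (imp (imp one one) x) = imp (imp x one) one;
  QW5c : forall x, imp (imp one one) (mi x) = mi (imp (imp one one) x);
  QW5d : forall x, mi (imp (imp one one) x) = imp (imp x (neg one)) (neg one);
  QW6 : forall x y, imp x y = imp (imp (pl y) (mi x)) (imp (pl x) (mi y));
  QW7 : forall x y, neg (imp x y) = imp y x;
  QW8 : forall x, neg (neg x) = x;
  QW9 : forall x y, pl (imp x (imp (neg x) y))
                  = imp (pl x) (imp (neg (pl x)) (pl y));
  QW10 : forall x y, qw_join x y = qw_join y x;
  QW11 : forall x y z, qw_join x (qw_join y z) = qw_join (qw_join x y) z;
  QW12 : forall x y z, imp x (qw_join y z) = qw_join (imp x y) (imp x z)
}.
End QW.

Section QMV.
Variables (A : Type) (oplus : A -> A -> A) (opp : A -> A)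
          (pl mi : A -> A) (zero one : A).

Definition qmv_join (x y : A) : A :=
  oplus (oplus (pl x) (pl (oplus (opp (pl x)) (pl y))))
        (oplus (mi x) (pl (oplus (opp (mi x)) (mi y)))).

Record is_quasi_MV_star : Prop := {
  QMV1 : forall x y, oplus x y = oplus y x;
  QMV2 : forall x y z, oplus (oplus one x) (oplus y (oplus one z))
                     = oplus (oplus (oplus one x) y) (oplus one z);
  QMV3 : forall x, oplus (oplus x one) one = one;
  QMV4 : forall x y, oplus (oplus x y) zero = oplus x y;
  QMV5a : forall x, oplus (pl x) zero = pl (oplus x zero);
  QMV5b : forall x, pl (oplus x zero) = oplus one (oplus (opp one) x);
  QMV5c : forall x, oplus (mi x) zero = mi (oplus x zero);
  QMV5d : forall x, mi (oplus x zero) = oplus (opp one) (oplus one x);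
  QMV6 : forall x y, oplus x y = oplus (oplus (pl x) (pl y)) (oplus (mi x) (mi y));
  QMV7 : zero = opp zero;
  QMV8 : forall x, oplus x (opp x) = zero;
  QMV9 : forall x y, opp (oplus x y) = oplus (opp x) (opp y);
  QMV10 : forall x, opp (opp x) = x;
  QMV11 : forall x y, pl (oplus (opp x) (oplus x y))
                    = oplus (opp (pl x)) (oplus (pl x) (pl y));
  QMV12 : forall x y, qmv_join x y = qmv_join y x;
  QMV13 : forall x y z, qmv_join x (qmv_join y z) = qmv_join (qmv_join x y) z;
  QMV14 : forall x y z, oplus x (qmv_join y z) = qmv_join (oplus x y) (oplus x z)
}.
End QMV.

Definition g_oplus {W : Type} (imp : W -> W -> W) (neg : W -> W) (x y : W) : W :=
  imp (neg x) y.
(* 0 := x -> x; any x gives the same value in a quasi-Wajsberg* algebra; we take x := 1 *)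
Definition g_zero {W : Type} (imp : W -> W -> W) (one : W) : W := imp one one.

From Stdlib Require Import Setoid.

(* The key fact is that [0 := 1 --> 1] is absorbed on both sides of [-->]:
   [x --> (0 --> y) = x --> y] follows from QW*12 because [y v y = 0 --> y],
   and [(0 --> x) --> y = x --> y] follows by contraposition.  Hence [x --> y]
   only depends on [x] and [y] up to the relation [0 --> a = 0 --> b], which
   identifies [mi (neg a)] with [neg (pl a)] and [pl (neg a)] with
   [neg (mi a)].  With [x ⊕ y = neg x --> y], every QMV* axiom is then a
   rewriting of the corresponding QW* axiom. *)

Section QuasiWajsbergStar.

Context {W : Type} {imp : W -> W -> W} {neg : W -> W} {pl mi : W -> W} {one : W}.
Hypothesis HW : is_quasi_Wajsberg_star W imp neg pl mi one.

Local Infix "-->" := imp (at level 55, right associativity).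
Local Infix "⊕" := (g_oplus imp neg) (at level 50, left associativity).
Local Notation zero := (one --> one).
Local Notation wjoin := (qw_join W imp neg pl mi).
Local Notation gjoin := (qmv_join W (g_oplus imp neg) neg pl mi).

Let QW1 := QW1 _ _ _ _ _ _ HW.
Let QW2 := QW2 _ _ _ _ _ _ HW.
Let QW3 := QW3 _ _ _ _ _ _ HW.
Let QW4 := QW4 _ _ _ _ _ _ HW.
Let QW5a := QW5a _ _ _ _ _ _ HW.
Let QW5b := QW5b _ _ _ _ _ _ HW.
Let QW5c := QW5c _ _ _ _ _ _ HW.
Let QW5d := QW5d _ _ _ _ _ _ HW.
Let QW6 := QW6 _ _ _ _ _ _ HW.
Let QW7 := QW7 _ _ _ _ _ _ HW.
Let QW8 := QW8 _ _ _ _ _ _ HW.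
Let QW9 := QW9 _ _ _ _ _ _ HW.
Let QW10 := QW10 _ _ _ _ _ _ HW.
Let QW11 := QW11 _ _ _ _ _ _ HW.
Let QW12 := QW12 _ _ _ _ _ _ HW.

Lemma neg_imp_self u w : neg (w --> w) = u --> u.
Proof.
  transitivity (neg ((u --> u) --> (w --> w))).
  - now rewrite QW4.
  - rewrite QW7. apply QW4.
Qed.

Lemma imp_self w : w --> w = zero.
Proof. rewrite <- (neg_imp_self w w). apply neg_imp_self. Qed.

Lemma neg_zero : neg zero = zero.
Proof. apply neg_imp_self. Qed.

Lemma neg_zero_imp a : neg (zero --> a) = zero --> neg a.
Proof. rewrite QW7, QW1, neg_zero. reflexivity. Qed.

Lemma pl_zero : pl zero = zero.
Proof. rewrite <- (imp_self zero) at 1. rewrite QW5b, QW3. reflexivity. Qed.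

Lemma mi_zero : mi zero = zero.
Proof.
  rewrite <- (imp_self zero) at 1.
  rewrite QW5d, <- neg_zero_imp, QW3. apply imp_self.
Qed.

Lemma zero_imp_mi_neg a : zero --> mi (neg a) = zero --> neg (pl a).
Proof.
  transitivity ((one --> a) --> neg one).
  - rewrite QW5c, QW5d, <- (QW1 one a). reflexivity.
  - rewrite <- neg_zero_imp, QW5a, QW5b, QW7, (QW1 one (a --> one)), QW7.
    reflexivity.
Qed.

Lemma zero_imp_pl_neg a : zero --> pl (neg a) = zero --> neg (mi a).
Proof.
  transitivity ((neg one --> a) --> one).
  - rewrite QW5a, QW5b, (QW1 (neg one) a), QW8. reflexivity.
  - rewrite <- neg_zero_imp, QW5c, QW5d, QW7, (QW1 (neg one) (a --> neg one)),
      QW7, QW8.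
    reflexivity.
Qed.

Lemma qw_join_idem w : wjoin w w = zero --> w.
Proof.
  unfold qw_join.
  rewrite (imp_self (pl w)), (imp_self (mi w)), pl_zero, mi_zero, zero_imp_mi_neg.
  rewrite (QW6 zero w), pl_zero, mi_zero, (QW1 (pl w)), neg_zero.
  reflexivity.
Qed.

Lemma zero_imp_absorb_r x y : x --> (zero --> y) = x --> y.
Proof. rewrite <- qw_join_idem, QW12, qw_join_idem, QW4. reflexivity. Qed.

Lemma zero_imp_absorb_l x y : (zero --> x) --> y = x --> y.
Proof.
  rewrite (QW1 (zero --> x) y), neg_zero_imp, zero_imp_absorb_r, <- QW1.
  reflexivity.
Qed.

Lemma imp_congr_zero a a' b b' :
  zero --> a = zero --> a' -> zero --> b = zero --> b' -> a --> b = a' --> b'.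
Proof.
  intros Ha Hb.
  rewrite <- (zero_imp_absorb_l a), Ha, zero_imp_absorb_l.
  rewrite <- (zero_imp_absorb_r a' b), Hb, zero_imp_absorb_r.
  reflexivity.
Qed.

Lemma g_oplusC x y : x ⊕ y = y ⊕ x.
Proof. unfold g_oplus. rewrite QW1, QW8. reflexivity. Qed.

Lemma g_oppD x y : neg (x ⊕ y) = neg x ⊕ neg y.
Proof.
  unfold g_oplus. rewrite QW7, QW8, (QW1 x (neg y)), QW8. reflexivity.
Qed.

Lemma g_oplus_oneCA p q w : (one ⊕ p) ⊕ ((one ⊕ q) ⊕ w) = (one ⊕ q) ⊕ ((one ⊕ p) ⊕ w).
Proof.
  (* QW*2 read in the language of ⊕; negating it turns [x ⊕ neg one] into [neg x ⊕ one]. *)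
  assert (negone_CA : forall x y z,
    (x ⊕ neg one) ⊕ ((y ⊕ neg one) ⊕ z) = (y ⊕ neg one) ⊕ ((x ⊕ neg one) ⊕ z)).
  { intros x y z. unfold g_oplus.
    rewrite !QW7, <- (QW1 x one), <- (QW1 y one). apply QW2. }
  pose proof (f_equal neg (negone_CA (neg p) (neg q) (neg w))) as H.
  rewrite !g_oppD, !QW8 in H.
  rewrite (g_oplusC one p), (g_oplusC one q). exact H.
Qed.

Lemma g_oplus_oneA x y z : (one ⊕ x) ⊕ (y ⊕ (one ⊕ z)) = ((one ⊕ x) ⊕ y) ⊕ (one ⊕ z).
Proof.
  rewrite (g_oplusC ((one ⊕ x) ⊕ y)), g_oplus_oneCA, (g_oplusC y). reflexivity.
Qed.

Lemma g_oplus_one_one x : (x ⊕ one) ⊕ one = one.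
Proof. unfold g_oplus. rewrite QW7. apply QW3. Qed.

Lemma g_oplus0 x y : (x ⊕ y) ⊕ zero = x ⊕ y.
Proof. rewrite g_oplusC. unfold g_oplus. rewrite neg_zero, QW4. reflexivity. Qed.

Lemma g_pl_oplus0 x : pl x ⊕ zero = pl (x ⊕ zero).
Proof. rewrite !(g_oplusC _ zero). unfold g_oplus. rewrite neg_zero. apply QW5a. Qed.

Lemma g_pl_oplus0E x : pl (x ⊕ zero) = one ⊕ (neg one ⊕ x).
Proof.
  rewrite (g_oplusC x zero). unfold g_oplus.
  rewrite neg_zero, QW5b, QW8, (QW1 (neg one)), QW7, QW8. reflexivity.
Qed.

Lemma g_mi_oplus0 x : mi x ⊕ zero = mi (x ⊕ zero).
Proof. rewrite !(g_oplusC _ zero). unfold g_oplus. rewrite neg_zero. apply QW5c. Qed.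

Lemma g_mi_oplus0E x : mi (x ⊕ zero) = neg one ⊕ (one ⊕ x).
Proof.
  rewrite (g_oplusC x zero). unfold g_oplus.
  rewrite neg_zero, QW5d, QW8, (QW1 one (neg one --> x)), QW7. reflexivity.
Qed.

Lemma g_oplus_pl_mi x y : x ⊕ y = (pl x ⊕ pl y) ⊕ (mi x ⊕ mi y).
Proof.
  unfold g_oplus. rewrite (QW6 (neg x) y), QW7. f_equal.
  - apply imp_congr_zero; [reflexivity | apply zero_imp_mi_neg].
  - apply imp_congr_zero; [apply zero_imp_pl_neg | reflexivity].
Qed.

Lemma g_oplusN x : x ⊕ neg x = zero.
Proof. apply imp_self. Qed.

Lemma g_pl_oplusNK x y : pl (neg x ⊕ (x ⊕ y)) = neg (pl x) ⊕ (pl x ⊕ pl y).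
Proof. unfold g_oplus. rewrite !QW8. apply QW9. Qed.

Lemma g_join x y : gjoin x y = wjoin x y.
Proof.
  unfold qmv_join, qw_join, g_oplus. rewrite !QW8, !QW7. f_equal.
  - apply imp_congr_zero; [reflexivity | symmetry; apply zero_imp_mi_neg].
  - rewrite (QW1 (mi (mi y --> mi x)) (mi x)).
    apply imp_congr_zero; [reflexivity |].
    rewrite <- zero_imp_pl_neg, QW7. reflexivity.
Qed.

Lemma g_joinC x y : gjoin x y = gjoin y x.
Proof. rewrite !g_join. apply QW10. Qed.

Lemma g_joinA x y z : gjoin x (gjoin y z) = gjoin (gjoin x y) z.
Proof. rewrite !g_join. apply QW11. Qed.

Lemma g_oplus_joinDr x y z : x ⊕ gjoin y z = gjoin (x ⊕ y) (x ⊕ z).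
Proof. rewrite !g_join. unfold g_oplus. apply QW12. Qed.

End QuasiWajsbergStar.

Theorem proposition3p7 (W : Type) (imp : W -> W -> W) (neg : W -> W)
    (pl mi : W -> W) (one : W) :
  is_quasi_Wajsberg_star W imp neg pl mi one ->
  is_quasi_MV_star W (g_oplus imp neg) neg pl mi (g_zero imp one) one.
Proof.
  intros HW. constructor.
  - exact (g_oplusC HW).
  - exact (g_oplus_oneA HW).
  - exact (g_oplus_one_one HW).
  - exact (g_oplus0 HW).
  - exact (g_pl_oplus0 HW).
  - exact (g_pl_oplus0E HW).
  - exact (g_mi_oplus0 HW).
  - exact (g_mi_oplus0E HW).
  - exact (g_oplus_pl_mi HW).
  - symmetry. exact (neg_zero HW).
  - exact (g_oplusN HW).
  - exact (g_oppD HW).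
  - exact (QW8 _ _ _ _ _ _ HW).
  - exact (g_pl_oplusNK HW).
  - exact (g_joinC HW).
  - exact (g_joinA HW).
  - exact (g_oplus_joinDr HW).
Qed.
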